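(* Let $(X,d_X,\mu,T)$ and $(Y,d_Y,\nu,S)$ be compact metric measure-preserving systems with $T,S$ continuous and $\mu,\nu$ of full support, and let $\lambda,\lambda'\in\mathcal J(T,S)$. Let $U:(X\times Y,\lambda)\to(X\times Y,\lambda')$ be a kernel-preserving isomorphism between $\mathcal K_\lambda$ and $\mathcal K_{\lambda'}$. Then there are $A\in\mathrm{Aut}_{\rm md}(X,d_X,\mu,T)$ and $B\in\mathrm{Aut}_{\rm md}(Y,d_Y,\nu,S)$ such that $U(x,y)=(Ax,By)$ for $\lambda$-a.e. $(x,y)$. Consequently $\lambda'=(A\times B)_\#\lambda$.
   Context: A compact metric measure-preserving system $(X,d_X,\mu,T)$: $(X,d_X)$ compact metric, $\mu$ Borel probability, $T$ Borel with $T_\#\mu=\mu$; probability spaces are standard and completed, maps and equalities modulo null sets. $\mathcal J(T,S)$ is the set of Borel probability measures on $X\times Y$ with marginals $\mu,\nu$ invariant under $T\times S$. For $\lambda\in\mathcal J(T,S)$, $\mathcal K_\lambda$ is the marked colored kernel space on $(X\times Y,\lambda)$ with marks $M_X^{a,b}(x,y)=d_X(T^ax,T^bx)$, $M_Y^{a,b}(x,y)=d_Y(S^ay,S^by)$ and kernels $K_X^{a,b}((x,y),(x',y'))=d_X(T^ax,T^bx')$, $K_Y^{a,b}((x,y),(x',y'))=d_Y(S^ay,S^by')$ for $a,b\ge0$. A kernel-preserving isomorphism between $\mathcal K_\lambda$ and $\mathcal K_{\lambda'}$ is a measure-space isomorphism $U:(X\times Y,\lambda)\to(X\times Y,\lambda')$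 with $M(z)=M(Uz)$ $\lambda$-a.e. for every mark $M$ and $K(z,z')=K(Uz,Uz')$ $\lambda\otimes\lambda$-a.e. for every kernel $K$ in the list above. $\mathrm{Aut}_{\rm md}(X,d_X,\mu,T)$ is the group of measure-space automorphisms $A$ of $(X,\mu)$ with $A\circ T=T\circ A$ modulo $\mu$ and $d_X(Ax,Ax')=d_X(x,x')$ for $\mu\otimes\mu$-a.e. $(x,x')$; similarly for $Y$. *)

From HB Require Import structures.
From mathcomp Require Import all_boot all_order all_algebra.
From mathcomp Require Import all_classical all_reals all_analysis.
Set Implicit Arguments. Unset Strict Implicit. Unset Printing Implicit Defensive.
Import Order.TTheory GRing.Theory Num.Theory.
Local Open Scope classical_set_scope.
Local Open Scope ring_scope.

Section Defs.
Context (R : realType).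

Definition is_metric (X : Type) (dX : X -> X -> R) : Prop :=
  [/\ forall x y, dX x y = 0 <-> x = y,
      forall x y, dX x y = dX y x &
      forall x y z, dX x z <= dX x y + dX y z].

Definition dopen (X : Type) (dX : X -> X -> R) : set (set X) :=
  [set A | forall x, A x -> exists e : R, 0 < e /\ [set y | dX x y < e] `<=` A].

Definition borel_for d (X : measurableType d) (dX : X -> X -> R) : Prop :=
  forall A : set X, measurable A <-> <<s dopen dX >> A.

Definition dcompact (X : Type) (dX : X -> X -> R) : Prop :=
  forall u : nat -> X, exists (phi : nat -> nat) (x : X),
    (forall n, (phi n < phi n.+1)%N) /\
    forall e : R, 0 < e -> exists N, forall n, (N <= n)%N -> dX (u (phi n)) x < e.

Definition dcontinuous (X : Type) (dX : X -> X -> R) (T : X -> X) : Prop :=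
  forall x (e : R), 0 < e -> exists delta : R, 0 < delta /\
    forall x', dX x x' < delta -> dX (T x) (T x') < e.

Definition full_support (X : Type) (dX : X -> X -> R) (mu : set X -> \bar R) : Prop :=
  forall x (r : R), 0 < r -> (0 < mu [set y | (dX x y < r)%R])%E.

Definition preserves d1 d2 (X1 : measurableType d1) (X2 : measurableType d2)
  (mu : set X1 -> \bar R) (nu : set X2 -> \bar R) (f : X1 -> X2) : Prop :=
  measurable_fun setT f /\ forall A, measurable A -> mu (f @^-1` A) = nu A.

Definition ms_iso d1 d2 (X1 : measurableType d1) (X2 : measurableType d2)
  (mu : set X1 -> \bar R) (nu : set X2 -> \bar R) (U : X1 -> X2) : Prop :=
  preserves mu nu U /\
  exists V : X2 -> X1, preserves nu mu V /\
    {ae mu, forall x, V (U x) = x} /\ {ae nu, forall y, U (V y) = y}.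

Definition cmmps d (X : measurableType d) (dX : X -> X -> R)
  (mu : probability X R) (T : X -> X) : Prop :=
  [/\ is_metric dX, borel_for dX, dcompact dX, preserves mu mu T &
      (dcontinuous dX T /\ full_support dX mu)].

Definition joining d1 d2 (X : measurableType d1) (Y : measurableType d2)
  (mu : probability X R) (T : X -> X) (nu : probability Y R) (S : Y -> Y)
  (lam : probability (X * Y)%type R) : Prop :=
  [/\ forall A, measurable A -> lam (A `*` setT) = mu A,
      forall B, measurable B -> lam (setT `*` B) = nu B &
      preserves lam lam (fun z => (T z.1, S z.2))].

(* marks and kernels of the marked colored kernel space K_lambda *)
Definition markX d1 (X : measurableType d1) (Y : Type) (dX : X -> X -> R)
  (T : X -> X) (a b : nat) (z : X * Y) : R :=
  dX (iter a T z.1) (iter b T z.1).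
Definition markY (X : Type) d2 (Y : measurableType d2) (dY : Y -> Y -> R)
  (S : Y -> Y) (a b : nat) (z : X * Y) : R :=
  dY (iter a S z.2) (iter b S z.2).
Definition kerX d1 (X : measurableType d1) (Y : Type) (dX : X -> X -> R)
  (T : X -> X) (a b : nat) (z z' : X * Y) : R :=
  dX (iter a T z.1) (iter b T z'.1).
Definition kerY (X : Type) d2 (Y : measurableType d2) (dY : Y -> Y -> R)
  (S : Y -> Y) (a b : nat) (z z' : X * Y) : R :=
  dY (iter a S z.2) (iter b S z'.2).

Definition kernel_preserving_iso d1 d2 (X : measurableType d1) (Y : measurableType d2)
  (dX : X -> X -> R) (T : X -> X) (dY : Y -> Y -> R) (S : Y -> Y)
  (lam lam' : probability (X * Y)%type R) (U : X * Y -> X * Y) : Prop :=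
  ms_iso lam lam' U /\
  (forall a b : nat,
     {ae lam, forall z, markX dX T a b z = markX dX T a b (U z)} /\
     {ae lam, forall z, markY dY S a b z = markY dY S a b (U z)} /\
     {ae (lam \x lam)%E, forall zz : (X * Y) * (X * Y),
        kerX dX T a b zz.1 zz.2 = kerX dX T a b (U zz.1) (U zz.2)} /\
     {ae (lam \x lam)%E, forall zz : (X * Y) * (X * Y),
        kerY dY S a b zz.1 zz.2 = kerY dY S a b (U zz.1) (U zz.2)}).

Definition Aut_md d (X : measurableType d) (dX : X -> X -> R)
  (mu : probability X R) (T : X -> X) (A : X -> X) : Prop :=
  [/\ ms_iso mu mu A,
      {ae mu, forall x, A (T x) = T (A x)} &
      {ae (mu \x mu)%E, forall p : X * X, dX (A p.1) (A p.2) = dX p.1 p.2}].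

End Defs.

(* Both coordinates are handled alike; for the first one put p := fst and
   q := fst \o U, two maps pushing lam forward to mu.  The kernels K_X^{0,0}
   and K_X^{1,0} say that d(p z, p z') = d(q z, q z') and
   d(T (p z), p z') = d(T (q z), q z') for (lam \x lam)-a.e. (z, z'); by
   Fubini, for a.e. z these hold for a.e. z', and since a conull set has a
   dense image (mu has full support) p z |-> q z is a well defined isometry
   between dense subsets of X.  Compactness extends it to an isometry A of X
   onto itself with q = A \o p a.e., hence A preserves mu; the second kernel
   gives A (T (p z)) = T (q z), so the continuous maps A \o T and T \o A
   agree on a dense set.  Finally U z = (A z.1, B z.2) for lam-a.e. z, and
   lam' = U_# lam is the image of lam under this product map. *)

From HB Require Import structures.
From mathcomp Require Import all_boot all_order all_algebra.
From mathcomp Require Import all_classical all_reals all_analysis.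
From mathcomp Require Import lra.
Import Order.TTheory GRing.Theory Num.Theory.
Local Open Scope classical_set_scope.
Local Open Scope ring_scope.

Lemma eq_approx {R : realFieldType} (a b : R) :
  (forall e, 0 < e -> exists2 c, `|a - c| < e & `|b - c| < e) -> a = b.
Proof.
move=> near; apply/eqP; rewrite -subr_eq0 -normr_le0.
apply/ler_addgt0Pr => e e0; rewrite add0r.
have [c ac bc] := near (e / 2) ltac:(by rewrite divr_gt0).
have := ler_distD c a b; rewrite (distrC c b); lra.
Qed.

Definition disometry {R : realType} {X : Type} (dX : X -> X -> R) (f : X -> X) :=
  forall x x', dX (f x) (f x') = dX x x'.

Definition dense_image {R : realType} {X Z : Type} (dX : X -> X -> R)
  (G : set Z) (p : Z -> X) :=
  forall x e, 0 < e -> exists2 z, G z & dX x (p z) < e.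

Section Metric.
Context {R : realType} {X : Type} {dX : X -> X -> R}.
Hypothesis met : is_metric dX.

Lemma metric_xx x : dX x x = 0.
Proof. by case: met => h _ _; apply/h. Qed.

Lemma metric_sym x y : dX x y = dX y x.
Proof. by case: met. Qed.

Lemma metric_triangle x y z : dX x z <= dX x y + dX y z.
Proof. by case: met. Qed.

Lemma metric_ge0 x y : 0 <= dX x y.
Proof. have := metric_triangle x y x; rewrite metric_xx (metric_sym y x); lra. Qed.

Lemma metric_lipschitzl x y z : `|dX x z - dX y z| <= dX x y.
Proof.
have := metric_triangle x y z; have := metric_triangle y x z.
rewrite ler_distl (metric_sym y x); lra.
Qed.

Lemma metric_lipschitzr x y z : `|dX z x - dX z y| <= dX x y.
Proof. by rewrite (metric_sym z x) (metric_sym z y) metric_lipschitzl. Qed.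

Lemma metric_eq_approx x y :
  (forall e, 0 < e -> exists2 w, dX x w < e & dX y w < e) -> x = y.
Proof.
move=> near; case: met => eq0 _ _; apply/eq0/eqP.
rewrite eq_le metric_ge0 andbT; apply/ler_addgt0Pr => e e0; rewrite add0r.
have [w xw yw] := near (e / 2) ltac:(by rewrite divr_gt0).
have := metric_triangle x w y; rewrite (metric_sym w y); lra.
Qed.

Lemma disometry_inj {f} : disometry dX f -> injective f.
Proof.
move=> fiso x x' fxx'; apply: metric_eq_approx => e e0.
by exists x'; rewrite ?metric_xx // -fiso fxx' metric_xx.
Qed.

Lemma disometry_dcontinuous {f} : disometry dX f -> dcontinuous dX f.
Proof. by move=> fiso x e e0; exists e; split => // x'; rewrite fiso. Qed.

Lemma dcontinuous_comp {f g} :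
  dcontinuous dX f -> dcontinuous dX g -> dcontinuous dX (f \o g).
Proof.
move=> fc gc x e e0; have [d [d0 fd]] := fc (g x) e e0.
have [d' [d'0 gd]] := gc x d d0.
by exists d'; split => // x' /gd /fd.
Qed.

Lemma dcontinuous_eq_dense {Z : Type} {G : set Z} {p : Z -> X} {f g} :
  dcontinuous dX f -> dcontinuous dX g -> dense_image dX G p ->
  (forall z, G z -> f (p z) = g (p z)) -> f = g.
Proof.
move=> fc gc pG fgG; apply/funext => x; apply: metric_eq_approx => e e0.
have [d [d0 fd]] := fc x e e0; have [d' [d'0 gd]] := gc x e e0.
have [z Gz] := pG x (Num.min d d') ltac:(by rewrite lt_min d0 d'0).
rewrite lt_min => /andP [xzd xzd'].
by exists (f (p z)); [apply: fd | rewrite fgG //; apply: gd].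
Qed.

Lemma disometry_inverse {f} : disometry dX f -> (forall y, exists x, f x = y) ->
  exists g, [/\ disometry dX g, cancel f g & cancel g f].
Proof.
move=> fiso /choice [g gK]; have fK : cancel f g.
  by move=> x; apply: disometry_inj fiso _ _ _; rewrite gK.
by exists g; split => // y y'; rewrite -fiso !gK.
Qed.

Lemma dense_image_cluster {Z : Type} {G : set Z} {p : Z -> X} (q : Z -> X) :
  dcompact dX -> dense_image dX G p -> forall x, exists y, forall e, 0 < e ->
  exists z, [/\ G z, dX x (p z) < e & dX y (q z) < e].
Proof.
move=> cpt pG x.
have /choice [zs zsP] : forall n, exists z, G z /\ dX x (p z) < n.+1%:R^-1.
  move=> n; have [z Gz xz] := pG x n.+1%:R^-1 ltac:(by rewrite invr_gt0).
  by exists z.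
have [phi [y [phi_incr q_cvg]]] := cpt (q \o zs).
exists y => e e0.
have [k _ /(_ k (leqnn k)) ke] := near_infty_natSinv_lt (PosNum e0).
have [N yN] := q_cvg e e0.
have phi_ge n : (n <= phi n)%N.
  by elim: n => // n ih; exact: leq_ltn_trans ih (phi_incr n).
have [Gz xz] := zsP (phi (maxn N k)).
exists (zs (phi (maxn N k))); split => //.
- apply: lt_trans xz (le_lt_trans _ ke).
  rewrite lef_pV2 ?posrE // ler_nat ltnS.
  exact: leq_trans (leq_maxr N k) (phi_ge _).
- by rewrite metric_sym; apply: yN; rewrite leq_maxl.
Qed.

End Metric.

Section IsometricExtension.
Context {R : realType} {X Z : Type} {dX : X -> X -> R}.
Context {G : set Z} {p q : Z -> X}.
Hypotheses (met : is_metric dX) (cpt : dcompact dX).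
Hypotheses (pG : dense_image dX G p) (qG : dense_image dX G q).
Hypothesis pq_iso : forall z z', G z -> G z' -> dX (q z) (q z') = dX (p z) (p z').

(* The value of the extension at x is pinned down by its distances to the
   dense set q @` G. *)
Let graph x y := forall z, G z -> dX y (q z) = dX x (p z).

Let graph_pq z : G z -> graph (p z) (q z).
Proof. by move=> Gz z' Gz'; rewrite pq_iso. Qed.

Let graph_of_cluster x y :
  (forall e, 0 < e -> exists z, [/\ G z, dX x (p z) < e & dX y (q z) < e]) ->
  graph x y.
Proof.
move=> near z0 Gz0; apply: eq_approx => e e0.
have [z [Gz xz yz]] := near e e0.
exists (dX (q z) (q z0)); first exact: le_lt_trans (metric_lipschitzl met _ _ _) yz.
by rewrite pq_iso //; exact: le_lt_trans (metric_lipschitzl met _ _ _) xz.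
Qed.

Let graph_total x : exists y, graph x y.
Proof.
have [y near] := dense_image_cluster met q cpt pG x.
by exists y; apply: graph_of_cluster.
Qed.

Let graph_onto y : exists x, graph x y.
Proof.
have [x near] := dense_image_cluster met p cpt qG y.
by exists x; apply: graph_of_cluster => e /near [z [Gz yz xz]]; exists z.
Qed.

Let graph_functional x y y' : graph x y -> graph x y' -> y = y'.
Proof.
move=> xy xy'; apply: (metric_eq_approx met) => e e0.
by have [z Gz xz] := pG x e e0; exists (q z); rewrite (xy, xy').
Qed.

Let graph_isometric x y x' y' : graph x y -> graph x' y' -> dX y y' = dX x x'.
Proof.
move=> xy xy'; apply: eq_approx => e e0.
have [z Gz xz] := pG x e e0.
exists (dX (q z) y').
  by apply: le_lt_trans (metric_lipschitzl met _ _ _) _; rewrite xy.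
rewrite (metric_sym met _ y') xy' // (metric_sym met x').
exact: le_lt_trans (metric_lipschitzl met _ _ _) xz.
Qed.

Lemma isometric_extension : exists A, [/\ disometry dX A,
  (forall y, exists x, A x = y) & forall z, G z -> A (p z) = q z].
Proof.
have /choice [A AP] : forall x, exists y, graph x y := graph_total.
exists A; split.
- by move=> x x'; apply: graph_isometric.
- move=> y; have [x xy] := graph_onto y.
  by exists x; exact: graph_functional _ _ _ (AP x) xy.
- by move=> z Gz; exact: graph_functional _ _ _ (AP _) (graph_pq z Gz).
Qed.

End IsometricExtension.

Lemma ae_product_xsection {R : realType} {d1 d2 : measure_display}
  {T1 : measurableType d1} {T2 : measurableType d2}
  {m1 : {measure set T1 -> \bar R}} {m2 : {sigma_finite_measure set T2 -> \bar R}}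
  {P : T1 * T2 -> Prop} :
  {ae (m1 \x m2)%E, forall zz, P zz} -> {ae m1, forall z, {ae m2, forall z', P (z, z')}}.
Proof.
case=> N [mN N0 NP].
have : (\int[m1]_z `|(m2 \o xsection N) z| = 0)%E.
  rewrite -N0 /product_measure1; apply: eq_integral => z _ /=.
  by rewrite gee0_abs.
move/(ae_eq_integral_abs m1 measurableT (measurable_fun_xsection m2 mN)).
apply: filterS => z /(_ I) /= Nz0.
exists (xsection N z); split => //; first exact: measurable_xsection.
by move=> z' /= nP; rewrite /xsection /= inE; exact: NP.
Qed.

Lemma measurableT_preimage {d1 d2 : measure_display}
  {T1 : measurableType d1} {T2 : measurableType d2} {f : T1 -> T2} {E : set T2} :
  measurable_fun setT f -> measurable E -> measurable (f @^-1` E).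
Proof. by move=> mf mE; rewrite -[_ @^-1` _]setTI; exact: mf. Qed.

Lemma measure_ae_eq_set {R : realType} {d : measure_display} {T : measurableType d}
  (mu : {measure set T -> \bar R}) (P Q : set T) :
  measurable P -> measurable Q -> {ae mu, forall z, P z <-> Q z} -> mu P = mu Q.
Proof.
move=> mP mQ [N [mN N0 PQN]].
have le (A B : set T) : measurable A -> measurable B ->
    (forall z, ~ N z -> A z -> B z) -> (mu A <= mu B)%E.
  move=> mA mB AB; rewrite -(measureU0 mB mN N0).
  apply: le_measure; rewrite ?inE //; first exact: measurableU.
  by move=> z Az; have [Nz|nNz] := pselect (N z); [right | left; exact: AB].
have PQ z : ~ N z -> P z <-> Q z by move=> nNz; apply: contrapT => /PQN.
by apply/eqP; rewrite eq_le !le // => z /PQ [].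
Qed.

Section Preserves.
Context {R : realType} {d1 d2 d3 : measure_display}.
Context {T1 : measurableType d1} {T2 : measurableType d2} {T3 : measurableType d3}.

Lemma preserves_id (lam : set T1 -> \bar R) : preserves lam lam id.
Proof. by split. Qed.

Lemma preserves_comp {lam : set T1 -> \bar R} {lam' : set T2 -> \bar R}
  {mu : set T3 -> \bar R} {U f} :
  preserves lam lam' U -> preserves lam' mu f -> preserves lam mu (f \o U).
Proof.
move=> [mU UP] [mf fP]; split; first exact: measurableT_comp.
by move=> E mE; rewrite comp_preimage UP ?fP //; exact: measurableT_preimage.
Qed.

Lemma preserves_ae_factor {lam : {measure set T1 -> \bar R}}
  {mu : set T2 -> \bar R} {nu : set T3 -> \bar R} {p q f} :
  measurable_fun setT f -> preserves lam mu p -> preserves lam nu q ->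
  {ae lam, forall z, q z = f (p z)} -> preserves mu nu f.
Proof.
move=> mf [mp pP] [mq qP] qfp; split => // E mE.
have mfE := measurableT_preimage mf mE.
rewrite -pP // -qP //; apply: measure_ae_eq_set.
- exact: measurableT_preimage mp mfE.
- exact: measurableT_preimage mq mE.
- by apply: filterS qfp => z /= ->.
Qed.

Lemma preserves_ms_iso {mu : {measure set T1 -> \bar R}}
  {nu : {measure set T2 -> \bar R}} {f g} :
  preserves mu nu f -> measurable_fun setT g -> cancel f g -> cancel g f ->
  ms_iso mu nu f.
Proof.
move=> [mf fP] mg fK gK; split => //; exists g.
split; last by split; apply: aeW.
split => // E mE; rewrite -fP; last exact: measurableT_preimage.
by congr (mu _); apply/seteqP; split => x; rewrite /preimage /= fK.
Qed.

End Preserves.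

Section BorelMetric.
Context {R : realType} {d : measure_display} {X : measurableType d}.
Context {dX : X -> X -> R}.
Hypotheses (met : is_metric dX) (bor : borel_for dX).

Lemma dball_measurable x r : measurable [set y | dX x y < r].
Proof.
apply/bor; apply: sub_sigma_algebra => y /= xy.
exists (r - dX x y); split; first by rewrite subr_gt0.
by move=> w /= yw; have := metric_triangle met x y w; lra.
Qed.

Lemma disometry_measurable {f} : disometry dX f -> measurable_fun setT f.
Proof.
move=> fiso; apply: (measurability (dopen dX)).
  by apply/funext => E; apply/propext; exact: bor.
move=> _ [B oB <-]; rewrite setTI; apply/bor; apply: sub_sigma_algebra.
move=> x /= /oB [e [e0 eB]].
by exists e; split => // y /= xy; apply: eB; rewrite /= fiso.
Qed.

Lemma ae_dense_image {dz : measure_display} {Z : measurableType dz}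
  {mu : set X -> \bar R} {lam : {measure set Z -> \bar R}} {f : Z -> X} {P : set Z} :
  full_support dX mu -> preserves lam mu f -> {ae lam, forall z, P z} ->
  dense_image dX P f.
Proof.
move=> fs [mf fP] [N [mN N0 PN]] x e e0; apply: contrapT => noz.
suff : (mu [set y | (dX x y < e)%R] <= lam N)%E by rewrite N0 leNgt fs.
rewrite -fP; last exact: dball_measurable.
apply: le_measure; rewrite ?inE //.
  exact: measurableT_preimage mf (dball_measurable _ _).
by move=> z /= xz; apply: PN => Pz; apply: noz; exists z.
Qed.

End BorelMetric.

Section CouplingAutomorphism.
Context {R : realType} {d dz : measure_display}.
Context {X : measurableType d} {Z : measurableType dz}.
Context {dX : X -> X -> R} {mu : probability X R} {T : X -> X}.
Context {lam : probability Z R} {p q : Z -> X}.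
Hypotheses (met : is_metric dX) (bor : borel_for dX) (cpt : dcompact dX).
Hypotheses (Tc : dcontinuous dX T) (fs : full_support dX mu).
Hypotheses (pP : preserves lam mu p) (qP : preserves lam mu q).
Hypothesis pq_ker : {ae (lam \x lam)%E, forall zz : Z * Z,
  dX (p zz.1) (p zz.2) = dX (q zz.1) (q zz.2)}.
Hypothesis pq_kerT : {ae (lam \x lam)%E, forall zz : Z * Z,
  dX (T (p zz.1)) (p zz.2) = dX (T (q zz.1)) (q zz.2)}.

Let good z := {ae lam, forall z',
  dX (p z) (p z') = dX (q z) (q z') /\ dX (T (p z)) (p z') = dX (T (q z)) (q z')}.

Let ae_good : {ae lam, forall z, good z}.
Proof.
apply: filterS2 (ae_product_xsection pq_ker) (ae_product_xsection pq_kerT) => z.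
exact: filterS2.
Qed.

Let dense_p P : {ae lam, forall z, P z} -> dense_image dX P p.
Proof. by move=> aP; apply: (ae_dense_image met bor fs pP). Qed.

Let good_isometric z1 z2 : good z1 -> good z2 ->
  dX (q z1) (q z2) = dX (p z1) (p z2).
Proof.
move=> g1 g2; apply: eq_approx => e e0.
have [z [[r1 _] [r2 _]] z2z] := dense_p _ (filterI g1 g2) (p z2) e e0.
exists (dX (p z1) (p z)).
  rewrite r1; apply: le_lt_trans (metric_lipschitzr met (q z2) (q z) (q z1)) _.
  by rewrite -r2.
exact: le_lt_trans (metric_lipschitzr met (p z2) (p z) (p z1)) z2z.
Qed.

Let good_commute A : disometry dX A -> (forall z, good z -> A (p z) = q z) ->
  forall z, good z -> A (T (p z)) = T (q z).
Proof.
move=> Aiso Apq z gz; apply: (metric_eq_approx met) => e e0.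
have [z' [gz' [_ rT]] zz'] := dense_p _ (filterI ae_good gz) (T (p z)) e e0.
exists (q z'); last by rewrite -rT.
by rewrite -(Apq z' gz') Aiso.
Qed.

Lemma coupling_automorphism :
  exists A, Aut_md dX mu T A /\ {ae lam, forall z, q z = A (p z)}.
Proof.
have dense_q : dense_image dX good q by apply: (ae_dense_image met bor fs qP).
have [A [Aiso Aonto Apq]] :=
  isometric_extension met cpt (dense_p _ ae_good) dense_q good_isometric.
have [B [Biso AK BK]] := disometry_inverse met Aiso Aonto.
have mA := disometry_measurable bor Aiso.
have AT : A \o T = T \o A.
  apply: (dcontinuous_eq_dense met _ _ (dense_p _ ae_good)).
  - exact: dcontinuous_comp (disometry_dcontinuous Aiso) Tc.
  - exact: dcontinuous_comp Tc (disometry_dcontinuous Aiso).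
  - by move=> z gz /=; rewrite (Apq z gz) good_commute.
have qAp : {ae lam, forall z, q z = A (p z)}.
  by apply: filterS ae_good => z /Apq ->.
exists A; split => //; split.
- apply: preserves_ms_iso (disometry_measurable bor Biso) AK BK.
  exact: preserves_ae_factor mA pP qP qAp.
- by apply: aeW => x; rewrite -[A (T x)]/((A \o T) x) AT.
- by apply: aeW => -[x x']; exact: Aiso.
Qed.

End CouplingAutomorphism.

Section Joinings.
Context {R : realType} {d1 d2 : measure_display}.
Context {X : measurableType d1} {Y : measurableType d2}.
Context {mu : probability X R} {T : X -> X} {nu : probability Y R} {S : Y -> Y}.
Context {lam : probability (X * Y)%type R}.

Lemma joining_preserves_fst : joining mu T nu S lam -> preserves lam mu fst.
Proof. by move=> [lam1 _ _]; split => // E mE; rewrite -setXT lam1. Qed.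

Lemma joining_preserves_snd : joining mu T nu S lam -> preserves lam nu snd.
Proof. by move=> [_ lam2 _]; split => // E mE; rewrite -setTX lam2. Qed.

End Joinings.

Section KernelIsomorphism.
Context {R : realType} {d1 d2 : measure_display}.
Context {X : measurableType d1} {Y : measurableType d2}.
Context {dX : X -> X -> R} {mu : probability X R} {T : X -> X}.
Context {dY : Y -> Y -> R} {nu : probability Y R} {S : Y -> Y}.
Context {lam lam' : probability (X * Y)%type R} {U : X * Y -> X * Y}.

Lemma kernel_iso_fst_aut : cmmps dX mu T ->
  joining mu T nu S lam -> joining mu T nu S lam' ->
  kernel_preserving_iso dX T dY S lam lam' U ->
  exists A, Aut_md dX mu T A /\ {ae lam, forall z, (U z).1 = A z.1}.
Proof.
move=> [met bor cpt _ [Tc fs]] jl jl' [[UP _] ker].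
exact: coupling_automorphism met bor cpt Tc fs (joining_preserves_fst jl)
  (preserves_comp UP (joining_preserves_fst jl')) (ker 0 0).2.2.1 (ker 1 0).2.2.1.
Qed.

Lemma kernel_iso_snd_aut : cmmps dY nu S ->
  joining mu T nu S lam -> joining mu T nu S lam' ->
  kernel_preserving_iso dX T dY S lam lam' U ->
  exists B, Aut_md dY nu S B /\ {ae lam, forall z, (U z).2 = B z.2}.
Proof.
move=> [met bor cpt _ [Sc fs]] jl jl' [[UP _] ker].
exact: coupling_automorphism met bor cpt Sc fs (joining_preserves_snd jl)
  (preserves_comp UP (joining_preserves_snd jl')) (ker 0 0).2.2.2 (ker 1 0).2.2.2.
Qed.

End KernelIsomorphism.

Theorem theorem10 (R : realType)
  (d1 d2 : measure_display)
  (X : measurableType d1) (dX : X -> X -> R) (mu : probability X R) (T : X -> X)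
  (Y : measurableType d2) (dY : Y -> Y -> R) (nu : probability Y R) (S : Y -> Y)
  (lam lam' : probability (X * Y)%type R) (U : X * Y -> X * Y) :
  cmmps dX mu T -> cmmps dY nu S ->
  joining mu T nu S lam -> joining mu T nu S lam' ->
  kernel_preserving_iso dX T dY S lam lam' U ->
  exists (A : X -> X) (B : Y -> Y),
    [/\ Aut_md dX mu T A, Aut_md dY nu S B,
        {ae lam, forall z, U z = (A z.1, B z.2)} &
        forall E, measurable E -> lam' E = lam ((fun z => (A z.1, B z.2)) @^-1` E)].
Proof.
move=> hX hY jl jl' ker.
have [A [autA UA]] := kernel_iso_fst_aut hX jl jl' ker.
have [B [autB UB]] := kernel_iso_snd_aut hY jl jl' ker.
have UAB : {ae lam, forall z, U z = (A z.1, B z.2)}.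
  by apply: filterS2 UA UB => z; case: (U z) => ? ? /= -> ->.
exists A, B; split => // E mE.
have mAB : measurable_fun setT (fun z : X * Y => (A z.1, B z.2)).
  case: autA autB => [[[mA _] _] _ _] [[[mB _] _] _ _].
  exact: measurable_fun_pair (measurableT_comp mA measurable_fst)
    (measurableT_comp mB measurable_snd).
case: ker => [[UP _] _].
by case: (preserves_ae_factor mAB (preserves_id lam) UP UAB) => _ ->.
Qed.
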